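(* Let $L$ be a $\kappa$-frame. The map $a\mapsto\partial_{(\downarrow a)^{**}}$ is a $\kappa$-frame homomorphism from $L$ to the frame ${\uparrow}\mathfrak{D}_L=\{C\in\mathbb{C}L\mid C\supseteq\mathfrak{D}_L\}$, and its kernel $\{(a,b)\mid\partial_{(\downarrow a)^{**}}=\partial_{(\downarrow b)^{**}}\}$ equals $\mathfrak{D}_L$. In particular this map is monotone, and the set of clear congruences of the form $\partial_{(\downarrow a)^{**}}$ ($a\in L$) is closed under finite meets and nonempty joins of fewer than $\kappa$ elements in $\mathbb{C}L$.
   Context: $\kappa$ is a fixed regular cardinal; a $\kappa$-frame is a bounded distributive lattice having joins of all subsets of cardinality $<\kappa$ and satisfying the frame distributive law for such joins; homomorphisms preserve finite meets and joins of $<\kappa$ elements. A $\kappa$-ideal is a downset in which every subset of cardinality $<\kappa$ has an upper bound; $\mathfrak{H}_\kappa L$ is the frame of $\kappa$-ideals under inclusion, $\downarrow a=\{x\mid x\le a\}$, and $J^*$ is the pseudocomplement in $\mathfrak{H}_\kappa L$. A congruence is an equivalence relation that is a sub-$\kappa$-frame of $L\times L$; $\mathbb{C}L$ is the frame of congruences under inclusion, and ${\uparrow}\mathfrak{D}_L$ carries the meets and joins of $\mathbb{C}L$, with bottom $\mathfrak{D}_L$. $\mathfrak{D}_L=\{(b,c)\mid\forall x\in L:\ b\wedge x=0\iff c\wedge x=0\}$; for a $\kappa$-ideal $I$, $\partial_I=\{(b,c)\mid\forall x\in L:\ b\wedge x\in I\iff c\wedge x\in I\}$, and congruences of this form are called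 clear. *)

From Stdlib Require Import Classical.

Set Implicit Arguments.

(** * Cardinals, represented by types *)
Definition injectiveF (A B : Type) (f : A -> B) : Prop :=
  forall x y, f x = f y -> x = y.

Definition lt_card (A B : Type) : Prop :=
  (exists f : A -> B, injectiveF f) /\ ~ (exists g : B -> A, injectiveF g).

Definition regular_cardinal (K : Type) : Prop :=
  (exists f : nat -> K, injectiveF f) /\
  forall (X I : Type) (F : I -> X -> Prop),
    lt_card I K ->
    (forall i, lt_card {x : X | F i x} K) ->
    lt_card {x : X | exists i, F i x} K.

Definition small (K X : Type) (S : X -> Prop) : Prop := lt_card {x : X | S x} K.

Record kFrame (K : Type) := {
  carrier :> Type;
  le : carrier -> carrier -> Prop;
  le_refl : forall x, le x x;
  le_trans : forall x y z, le x y -> le y z -> le x z;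
  le_antisym : forall x y, le x y -> le y x -> x = y;
  bot : carrier;
  top : carrier;
  bot_le : forall x, le bot x;
  le_top : forall x, le x top;
  meet : carrier -> carrier -> carrier;
  meet_glb : forall x y z, le z (meet x y) <-> (le z x /\ le z y);
  sup : (carrier -> Prop) -> carrier;
  sup_lub : forall S, small K S ->
    forall z, le (sup S) z <-> (forall s, S s -> le s z);
  (** frame distributive law for such joins (this also gives binary
      distributivity, as κ is infinite) *)
  frame_distr : forall a S, small K S ->
    meet a (sup S) = sup (fun y => exists s, S s /\ y = meet a s)
}.

Arguments le {K L} : rename.
Arguments bot {K L} : rename.
Arguments top {K L} : rename.
Arguments meet {K L} : rename.
Arguments sup {K L} : rename.

Section Defs.
Variables (K : Type) (L : kFrame K).

Definition kideal (I : L -> Prop) : Prop :=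
  (forall x y, le x y -> I y -> I x) /\
  (forall S : L -> Prop, small K S -> (forall s, S s -> I s) ->
     exists u, I u /\ forall s, S s -> le s u).

Definition down (a : L) : L -> Prop := fun x => le x a.

(** Pseudocomplement in the frame H_κ L of κ-ideals (ordered by inclusion,
    meet = intersection, bottom = ↓0): the largest κ-ideal whose intersection
    with J is ↓0, i.e. the union of all such κ-ideals. *)
Definition pcompl (J : L -> Prop) : L -> Prop :=
  fun x => exists I, kideal I /\ (forall y, I y -> J y -> y = bot) /\ I x.

Definition rel := L -> L -> Prop.

Definition rincl (C D : rel) : Prop := forall a b, C a b -> D a b.
Definition req (C D : rel) : Prop := forall a b, C a b <-> D a b.
Definition rfull : rel := fun _ _ => True.
Definition rcap (C D : rel) : rel := fun a b => C a b /\ D a b.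

Definition congruence (C : rel) : Prop :=
  (forall a, C a a) /\
  (forall a b, C a b -> C b a) /\
  (forall a b c, C a b -> C b c -> C a c) /\
  C bot bot /\ C top top /\
  (forall a b c d, C a b -> C c d -> C (meet a c) (meet b d)) /\
  (forall S : L * L -> Prop, small K S -> (forall p, S p -> C (fst p) (snd p)) ->
     C (sup (fun x => exists y, S (x, y))) (sup (fun y => exists x, S (x, y)))).

Definition DL : rel :=
  fun b c => forall x : L, meet b x = bot <-> meet c x = bot.

Definition partial (I : L -> Prop) : rel :=
  fun b c => forall x : L, I (meet b x) <-> I (meet c x).

Definition phi (a : L) : rel := partial (pcompl (pcompl (down a))).

(** Join in the frame ℂL of the congruences F s, s ∈ S: the least congruence
    containing all of them. *)
Definition cjoin (S : L -> Prop) (F : L -> rel) : rel :=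
  fun a b => forall C, congruence C -> (forall s, S s -> rincl (F s) C) -> C a b.

(** Join in ↑𝔇_L = {C ∈ ℂL | C ⊇ 𝔇_L}: the least congruence containing 𝔇_L
    and all F s, s ∈ S (for S empty this is the bottom 𝔇_L). *)
Definition upjoin (S : L -> Prop) (F : L -> rel) : rel :=
  fun a b => forall C, congruence C -> rincl DL C ->
    (forall s, S s -> rincl (F s) C) -> C a b.

End Defs.

Arguments kideal {K L}.
Arguments down {K L}.
Arguments pcompl {K L}.
Arguments rincl {K L}.
Arguments req {K L}.
Arguments rcap {K L}.
Arguments congruence {K L}.
Arguments partial {K L}.
Arguments phi {K L}.
Arguments cjoin {K L}.
Arguments upjoin {K L}.

From Stdlib Require Import ProofIrrelevance FunctionalExtensionality PropExtensionality.

Set Implicit Arguments.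

(* For a down-closed J, the pseudocomplement J* is the κ-ideal of elements
   disjoint from all of J, so (↓a)** consists of the w disjoint from every
   element of the annihilator of a.  Meets are preserved because
   (a ∧ b)** = a** ∩ b**.  For a join a = ⋁S, a congruence C ⊇ 𝔇_L
   containing every φ s relates 0 with each s, hence 0 with a, hence b with
   b ∨ a; and if φ a relates b and c, then b ∨ a and c ∨ a have the same
   annihilator, so they are related by 𝔇_L ⊆ C.  The kernel is 𝔇_L because
   φ a relates 0 with a, which forces the annihilator of a to be contained
   in that of any b with φ b = φ a, while (↓a)** only depends on it. *)

Section Cardinality.
Variable K : Type.

Lemma lt_card_inj (A B : Type) (f : A -> B) :
  injectiveF f -> lt_card B K -> lt_card A K.
Proof.
  intros Hf [[g Hg] Hn]. split.
  - exists (fun x => g (f x)). intros x y E. apply Hf, Hg, E.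
  - intros [h Hh]. apply Hn. exists (fun k => f (h k)). intros x y E. apply Hh, Hf, E.
Qed.

Lemma small_sub (X : Type) (S T : X -> Prop) :
  small K S -> (forall x, T x -> S x) -> small K T.
Proof.
  intros HS HTS. unfold small in *.
  apply (lt_card_inj (f := fun p : {x | T x} => exist S (proj1_sig p) (HTS _ (proj2_sig p))));
    [|exact HS].
  intros [x px] [y py] E. simpl in E. injection E as ->.
  f_equal. apply proof_irrelevance.
Qed.

Hypothesis hK : regular_cardinal K.

Lemma small_singleton (X : Type) (b : X) : small K (fun z => z = b).
Proof.
  destruct hK as [[g Hg] _]. split.
  - exists (fun _ => g 0). intros [x px] [y py] _. subst. reflexivity.
  - intros [h Hh].
    assert (E : h (g 0) = h (g 1)).
    { destruct (h (g 0)) as [x px], (h (g 1)) as [y py]. subst. reflexivity. }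
    apply Hh, Hg in E. discriminate.
Qed.

Lemma lt_card_bool : lt_card bool K.
Proof.
  destruct hK as [[g Hg] _]. split.
  - exists (fun b : bool => if b then g 0 else g 1).
    intros [|] [|] E; auto; apply Hg in E; discriminate.
  - intros [h Hh].
    assert (Hne : forall m n, h (g m) = h (g n) -> m = n) by (intros m n E; apply Hg, Hh, E).
    destruct (h (g 0)) eqn:E0, (h (g 1)) eqn:E1, (h (g 2)) eqn:E2;
      first [ discriminate (Hne 0 1 (eq_trans E0 (eq_sym E1)))
            | discriminate (Hne 0 2 (eq_trans E0 (eq_sym E2)))
            | discriminate (Hne 1 2 (eq_trans E1 (eq_sym E2))) ].
Qed.

Lemma small_image (A X : Type) (S : A -> Prop) (f : A -> X) :
  small K S -> small K (fun y => exists p, S p /\ y = f p).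
Proof.
  intros HS.
  pose proof (proj2 hK X {p | S p} (fun i y => y = f (proj1_sig i)) HS
    (fun i => small_singleton (f (proj1_sig i)))) as Hunion.
  apply (small_sub _ Hunion). intros y [p [Hp ->]]. exists (exist _ p Hp). reflexivity.
Qed.

Lemma small_pair (X : Type) (x y : X) : small K (fun z => z = x \/ z = y).
Proof.
  pose proof (proj2 hK X bool (fun (b : bool) z => z = if b then x else y) lt_card_bool
    (fun b => small_singleton _)) as Hunion.
  apply (small_sub _ Hunion). intros z [-> | ->]; [exists true | exists false]; reflexivity.
Qed.

Lemma small_proj1 (X Y : Type) (T : X * Y -> Prop) :
  small K T -> small K (fun x => exists y, T (x, y)).
Proof.
  intros HT. apply (small_sub _ (small_image fst HT)).
  intros x [y Hy]. exists (x, y). auto.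
Qed.

Lemma small_proj2 (X Y : Type) (T : X * Y -> Prop) :
  small K T -> small K (fun y => exists x, T (x, y)).
Proof.
  intros HT. apply (small_sub _ (small_image snd HT)).
  intros y [x Hx]. exists (x, y). auto.
Qed.

End Cardinality.

Section Frame.
Variables (K : Type) (L : kFrame K).
Implicit Types (a b c s u v w x y z : L) (S J I : L -> Prop).

Lemma meet_le_l x y : le (meet x y) x.
Proof. exact (proj1 (proj1 (meet_glb L x y _) (le_refl L _))). Qed.

Lemma meet_le_r x y : le (meet x y) y.
Proof. exact (proj2 (proj1 (meet_glb L x y _) (le_refl L _))). Qed.

Lemma le_meet {z x y} : le z x -> le z y -> le z (meet x y).
Proof. intros; apply (meet_glb L); auto. Qed.

Lemma le_bot {x} : le x bot -> x = bot.
Proof. intros H. apply (le_antisym L _ _ H), bot_le. Qed.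

Lemma meet_mono_l {x x'} y : le x x' -> le (meet x y) (meet x' y).
Proof. intros H. apply le_meet; [apply (le_trans L _ x), H; apply meet_le_l | apply meet_le_r]. Qed.

Lemma meetC x y : meet x y = meet y x.
Proof. apply (le_antisym L); apply le_meet; apply meet_le_r || apply meet_le_l. Qed.

Lemma meetA x y z : meet x (meet y z) = meet (meet x y) z.
Proof.
  apply (le_antisym L); repeat apply le_meet;
    solve [ apply meet_le_l | apply meet_le_r
          | apply (le_trans L _ _ _ (meet_le_r _ _)); apply meet_le_l || apply meet_le_r
          | apply (le_trans L _ _ _ (meet_le_l _ _)); apply meet_le_l || apply meet_le_r ].
Qed.

Lemma meetCA x y z : meet x (meet y z) = meet y (meet x z).
Proof. rewrite !meetA, (meetC x y). reflexivity. Qed.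

Lemma meetxx x : meet x x = x.
Proof. apply (le_antisym L); [apply meet_le_l | apply le_meet; apply le_refl]. Qed.

Lemma meet0x x : meet bot x = bot.
Proof. apply le_bot, meet_le_l. Qed.

Lemma meetTx x : meet top x = x.
Proof. apply (le_antisym L); [apply meet_le_r | apply le_meet; [apply le_top | apply le_refl]]. Qed.

Lemma meet_eq_bot_le {x x' y} : le x x' -> meet x' y = bot -> meet x y = bot.
Proof. intros Hx E. apply le_bot. rewrite <- E. apply meet_mono_l, Hx. Qed.

Lemma sup_ub S {s} : small K S -> S s -> le s (sup S).
Proof. intros HS Hs. exact (proj1 (sup_lub L HS (sup S)) (le_refl L _) s Hs). Qed.

Lemma sup_least S z : small K S -> (forall s, S s -> le s z) -> le (sup S) z.
Proof. intros HS H. exact (proj2 (sup_lub L HS z) H). Qed.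

Lemma sup_ext S S' : (forall x, S x <-> S' x) -> sup S = sup S'.
Proof.
  intros H. f_equal. apply functional_extensionality. intro x.
  apply propositional_extensionality, H.
Qed.

Definition join x y : L := sup (fun z => z = x \/ z = y).

Hypothesis hK : regular_cardinal K.

Lemma join_bot_r x : join x bot = x.
Proof.
  apply (le_antisym L).
  - apply sup_least; [apply small_pair, hK|].
    intros s [-> | ->]; [apply (le_refl L) | apply (bot_le L)].
  - apply sup_ub; [apply small_pair, hK | auto].
Qed.

Lemma kideal_meet_sup I S x : kideal I -> small K S ->
  (I (meet (sup S) x) <-> forall s, S s -> I (meet s x)).
Proof.
  intros [Idown Isup] HS. split.
  - intros H s Hs. apply (Idown _ _ (meet_mono_l x (sup_ub HS Hs)) H).
  - intros H. rewrite meetC, (frame_distr L x HS).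
    assert (HT : small K (fun y => exists s, S s /\ y = meet x s)) by (apply small_image; auto).
    destruct (Isup _ HT) as [m [Im Hm]].
    { intros y [s [Hs ->]]. rewrite meetC. auto. }
    apply (Idown _ m); [apply sup_least|]; auto.
Qed.

Lemma kideal_bot : kideal (fun z : L => z = bot).
Proof.
  split.
  - intros x y Hxy ->. apply le_bot, Hxy.
  - intros S _ HS. exists bot. split; [reflexivity|].
    intros s Hs. rewrite (HS s Hs). apply (le_refl L).
Qed.

Lemma meet_sup_eq_bot S x : small K S ->
  (meet (sup S) x = bot <-> forall s, S s -> meet s x = bot).
Proof. apply (kideal_meet_sup x kideal_bot). Qed.

Lemma meet_join_eq_bot x y z :
  meet (join x y) z = bot <-> meet x z = bot /\ meet y z = bot.
Proof.
  unfold join. rewrite meet_sup_eq_bot by (apply small_pair, hK). split.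
  - intros H; split; apply H; auto.
  - intros [Hx Hy] s [-> | ->]; auto.
Qed.

Definition orth J : L -> Prop := fun x => forall y, J y -> meet x y = bot.

Definition ann a : L -> Prop := fun x => meet a x = bot.

Lemma kideal_orth J : kideal (orth J).
Proof.
  split.
  - intros x x' Hx Hx' y Hy. apply (meet_eq_bot_le Hx), Hx', Hy.
  - intros S HS HSJ. exists (sup S). split.
    + intros y Hy. apply meet_sup_eq_bot; auto. intros s Hs. apply HSJ; auto.
    + intros s Hs. apply sup_ub; auto.
Qed.

Lemma pcompl_orth J : (forall x y, le x y -> J y -> J x) -> pcompl J = orth J.
Proof.
  intros Jdown. apply functional_extensionality. intro x.
  apply propositional_extensionality. split.
  - intros [I [[Idown _] [HIJ Ix]]] y Jy.
    apply HIJ; [apply (Idown _ _ (meet_le_l x y) Ix) | apply (Jdown _ _ (meet_le_r x y) Jy)].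
  - intros Hx. exists (orth J). split; [apply kideal_orth|]. split; [|exact Hx].
    intros y Hy Jy. rewrite <- (meetxx y). apply Hy, Jy.
Qed.

Lemma orth_down a : orth (down a) = ann a.
Proof.
  apply functional_extensionality. intro x. apply propositional_extensionality.
  unfold orth, ann, down. split.
  - intros H. rewrite meetC. apply H, le_refl.
  - intros H y Hy. rewrite meetC. apply (meet_eq_bot_le Hy), H.
Qed.

Lemma pcompl2_down a : pcompl (pcompl (down a)) = orth (ann a).
Proof.
  rewrite (pcompl_orth (down a)) by (intros x y Hxy Hy; apply (le_trans L _ y); auto).
  rewrite orth_down. apply pcompl_orth.
  intros x y Hxy Hy. unfold ann. rewrite meetC. apply (meet_eq_bot_le Hxy).
  rewrite meetC. exact Hy.
Qed.

Lemma phiE a : phi a = partial (orth (ann a)).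
Proof. unfold phi. rewrite pcompl2_down. reflexivity. Qed.

Lemma partial_congruence I : kideal I -> congruence (partial I).
Proof.
  intros HI. unfold congruence, partial.
  split; [|split; [|split; [|split; [|split; [|split]]]]].
  - intros; reflexivity.
  - intros b c H x. symmetry. apply H.
  - intros b c d H1 H2 x. rewrite H1. apply H2.
  - intros; reflexivity.
  - intros; reflexivity.
  - intros b c d e H1 H2 x.
    rewrite <- !meetA, H1, (meetCA c), H2, (meetCA e). reflexivity.
  - intros T HT HTI x.
    rewrite !(kideal_meet_sup x HI) by (apply small_proj1 || apply small_proj2; auto).
    split.
    + intros H t [s Hst]. apply (HTI _ Hst), H. exists t. exact Hst.
    + intros H s [t Hst]. apply (HTI _ Hst), H. exists s. exact Hst.
Qed.

Lemma phi_congruence a : congruence (phi a).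
Proof. rewrite phiE. apply partial_congruence, kideal_orth. Qed.

Lemma orth_self J w : orth J w -> J w -> w = bot.
Proof. intros Hw Jw. rewrite <- (meetxx w). apply Hw, Jw. Qed.

Lemma orth_ann_le a w : le w a -> orth (ann a) w.
Proof. intros Hw y Hy. apply (meet_eq_bot_le Hw), Hy. Qed.

Lemma orth_ann_meet a b w :
  orth (ann (meet a b)) w <-> orth (ann a) w /\ orth (ann b) w.
Proof.
  split.
  - intros Hw. split; intros y Hy; apply Hw; unfold ann in *.
    + apply (meet_eq_bot_le (meet_le_l a b)), Hy.
    + rewrite (meetC a b). apply (meet_eq_bot_le (meet_le_l b a)), Hy.
  - intros [Ha Hb] y Hy.
    assert (Hwyb : meet w (meet y b) = bot).
    { apply Ha. unfold ann. rewrite (meetC y), meetA. exact Hy. }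
    rewrite <- (meetxx w), <- meetA. apply Hb. unfold ann.
    rewrite meetC, <- meetA. exact Hwyb.
Qed.

Lemma orth_ann_top w : orth (ann top) w.
Proof. intros y Hy. unfold ann in Hy. rewrite meetTx in Hy. rewrite Hy, meetC. apply meet0x. Qed.

Lemma DL_sub_phi a : rincl (DL L) (phi a).
Proof.
  intros b c H. rewrite phiE. intros x. split; intros Hx y Hy;
    rewrite <- meetA; apply H; rewrite meetA; apply Hx, Hy.
Qed.

Lemma phi_ann_iff a u v z : phi a u v -> ann a z ->
  (meet u z = bot <-> meet v z = bot).
Proof.
  rewrite phiE. intros H Hz.
  assert (Hdir : forall u' v', partial (orth (ann a)) u' v' ->
                 meet u' z = bot -> meet v' z = bot).
  { intros u' v' Huv E. apply (orth_self (J := ann a)).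
    - apply Huv. rewrite E. intros y _. apply meet0x.
    - unfold ann. rewrite meetCA. rewrite Hz, meetC. apply meet0x. }
  split; apply Hdir; [exact H | intro x; symmetry; apply H].
Qed.

Lemma phi_bot_self s : phi s bot s.
Proof.
  rewrite phiE. intros x. split; intros _.
  - apply orth_ann_le, meet_le_l.
  - rewrite meet0x. intros y _. apply meet0x.
Qed.

Lemma phi_mono {a a'} : le a a' -> rincl (phi a) (phi a').
Proof.
  intros Ha u v H. rewrite phiE. intros x.
  assert (Hann : forall y, ann a' y -> ann a (meet x y)).
  { intros y Hy. apply le_bot. rewrite <- Hy. apply le_meet.
    - apply (le_trans L _ a); [apply meet_le_l | exact Ha].
    - apply (le_trans L _ (meet x y)); apply meet_le_r. }
  split; intros Hx y Hy; rewrite <- meetA;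
    apply (phi_ann_iff H (Hann y Hy)); rewrite meetA; apply Hx, Hy.
Qed.

Lemma phi_top : req (phi top) (rfull L).
Proof. intros b c. rewrite phiE. split; intros _; [exact I | split; intros; apply orth_ann_top]. Qed.

Lemma phi_meet a b : req (phi (meet a b)) (rcap (phi a) (phi b)).
Proof.
  intros u v. split.
  - intros H. split; [apply (phi_mono (meet_le_l a b)) | apply (phi_mono (meet_le_r a b))];
      exact H.
  - intros [Ha Hb]. rewrite phiE in *. intros x.
    rewrite !orth_ann_meet, (Ha x), (Hb x). reflexivity.
Qed.

Lemma phi_join_DL a b c : phi a b c -> DL L (join b a) (join c a).
Proof.
  intros H z. rewrite !meet_join_eq_bot.
  split; intros [Ez Ea]; split; try exact Ea; apply (phi_ann_iff H Ea), Ez.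
Qed.

Lemma DL_ann a b : DL L a b -> ann a = ann b.
Proof.
  intros H. apply functional_extensionality. intro x.
  apply propositional_extensionality, H.
Qed.

Lemma phi_kernel a b : req (phi a) (phi b) <-> DL L a b.
Proof.
  split.
  - intros H z.
    assert (Hab : phi b bot a) by apply H, phi_bot_self.
    assert (Hba : phi a bot b) by apply H, phi_bot_self.
    split; intros E.
    + apply (phi_ann_iff Hba E), meet0x.
    + apply (phi_ann_iff Hab E), meet0x.
  - intros H u v. rewrite !phiE, (DL_ann H). reflexivity.
Qed.

Lemma congruence_join C x1 y1 x2 y2 : congruence C ->
  C x1 y1 -> C x2 y2 -> C (join x1 x2) (join y1 y2).
Proof.
  intros (_ & _ & _ & _ & _ & _ & Csup) H1 H2.
  set (T := fun p : L * L => p = (x1, y1) \/ p = (x2, y2)).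
  assert (Hjoin : C (sup (fun x => exists y, T (x, y))) (sup (fun y => exists x, T (x, y)))).
  { apply Csup; [apply small_pair, hK|]. intros p [-> | ->]; auto. }
  assert (Hfst : sup (fun z => z = x1 \/ z = x2) = sup (fun x => exists y, T (x, y))).
  { apply sup_ext. intros z. unfold T. split.
    - intros [-> | ->]; eauto.
    - intros [y [E | E]]; injection E; auto. }
  assert (Hsnd : sup (fun z => z = y1 \/ z = y2) = sup (fun y => exists x, T (x, y))).
  { apply sup_ext. intros z. unfold T. split.
    - intros [-> | ->]; eauto.
    - intros [x [E | E]]; injection E; auto. }
  unfold join. rewrite Hfst, Hsnd. exact Hjoin.
Qed.

Lemma congruence_bot_sup C S : congruence C -> small K S ->
  (forall s, S s -> C bot s) -> C bot (sup S).
Proof.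
  intros (_ & _ & _ & _ & _ & _ & Csup) HS H0.
  set (T := fun p : L * L => S (snd p) /\ fst p = bot).
  assert (HT : small K T).
  { apply (small_sub _ (small_image hK (fun s => (@bot K L, s)) HS)).
    intros [u v] [Hv Hu]. simpl in *. subst. exists v; auto. }
  assert (Hbot : sup (fun x => exists y, T (x, y)) = bot).
  { apply le_bot, sup_least.
    - apply (small_sub _ (small_singleton hK bot)). intros x [y [_ E]]. exact E.
    - intros s [y [_ E]]. simpl in E. subst. apply (le_refl L). }
  assert (HS' : sup (fun y => exists x, T (x, y)) = sup S).
  { apply sup_ext. intros y; split; [intros [x [Hy _]]; exact Hy | intros Hy; exists bot; split; auto]. }
  rewrite <- Hbot, <- HS'. apply Csup; [exact HT|].
  intros [u v] [Hv Hu]. simpl in *. subst. apply H0, Hv.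
Qed.

Lemma phi_sup_least S C : small K S -> congruence C -> rincl (DL L) C ->
  (forall s, S s -> rincl (phi s) C) -> rincl (phi (sup S)) C.
Proof.
  intros HS HC HDL HphiC b c H.
  pose proof HC as (Crefl & Csym & Ctrans & _).
  assert (C0a : C bot (sup S)).
  { apply congruence_bot_sup; auto. intros s Hs. apply (HphiC s Hs), phi_bot_self. }
  assert (Cjoin : forall x, C x (join x (sup S))).
  { intros x. rewrite <- (join_bot_r x) at 1. apply congruence_join; auto. }
  apply (Ctrans _ _ _ (Cjoin b)), (Ctrans _ (join c (sup S))), Csym, Cjoin.
  apply HDL, phi_join_DL, H.
Qed.

Lemma phi_sup_upjoin S : small K S -> req (phi (sup S)) (upjoin S (@phi K L)).
Proof.
  intros HS b c. split.
  - intros H C HC HDL HphiC. apply (phi_sup_least HS HC HDL HphiC), H.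
  - intros H. apply H; [apply phi_congruence | apply DL_sub_phi |].
    intros s Hs. apply phi_mono, sup_ub; auto.
Qed.

Lemma phi_sup_cjoin S : small K S -> (exists s, S s) -> req (phi (sup S)) (cjoin S (@phi K L)).
Proof.
  intros HS [s0 Hs0] b c. split.
  - intros H C HC HphiC. apply (phi_sup_least HS HC); [|exact HphiC|exact H].
    intros u v Huv. apply (HphiC s0 Hs0), DL_sub_phi, Huv.
  - intros H. apply H; [apply phi_congruence|].
    intros s Hs. apply phi_mono, sup_ub; auto.
Qed.

End Frame.

Theorem mainTheorem19 (K : Type) (hK : regular_cardinal K) (L : kFrame K) :
  (* the map lands in ↑𝔇_L *)
  (forall a : L, congruence (phi a) /\ rincl (@DL K L) (phi a)) /\
  (* it is a κ-frame homomorphism L → ↑𝔇_L *)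
  req (phi (@top K L)) (@rfull K L) /\
  (forall a b : L, req (phi (meet a b)) (rcap (phi a) (phi b))) /\
  (forall S : L -> Prop, small K S -> req (phi (sup S)) (upjoin S (@phi K L))) /\
  (* its kernel is 𝔇_L *)
  (forall a b : L, req (phi a) (phi b) <-> @DL K L a b) /\
  (* in particular: monotone *)
  (forall a b : L, le a b -> rincl (phi a) (phi b)) /\
  (* closed under finite meets in ℂL *)
  (exists c : L, req (phi c) (@rfull K L)) /\
  (forall a b : L, exists c : L, req (phi c) (rcap (phi a) (phi b))) /\
  (* closed under nonempty joins of fewer than κ elements in ℂL *)
  (forall S : L -> Prop, small K S -> (exists s, S s) ->
     exists c : L, req (phi c) (cjoin S (@phi K L))).
Proof.
  split; [intro a; exact (conj (phi_congruence L hK a) (DL_sub_phi hK a))|].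
  split; [exact (phi_top L hK)|].
  split; [exact (phi_meet L hK)|].
  split; [exact (phi_sup_upjoin L hK)|].
  split; [exact (phi_kernel L hK)|].
  split; [intros a b; exact (phi_mono hK)|].
  split; [exists top; exact (phi_top L hK)|].
  split; [intros a b; exists (meet a b); exact (phi_meet L hK a b)|].
  intros S HS HS0. exists (sup S). exact (phi_sup_cjoin L hK HS HS0).
Qed.
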